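(* Consider the central arrangement in $\mathbb{R}^8$ (coordinates $l_{ijk}$, $i,j,k\in\{0,1\}$) of the six hyperplanes $\mathcal{L}_{1,0}=\{l_{000}+l_{011}-l_{001}-l_{010}=0\}$, $\mathcal{L}_{1,1}=\{l_{100}+l_{111}-l_{101}-l_{110}=0\}$, $\mathcal{L}_{2,0}=\{l_{000}+l_{101}-l_{001}-l_{100}=0\}$, $\mathcal{L}_{2,1}=\{l_{010}+l_{111}-l_{011}-l_{110}=0\}$, $\mathcal{L}_{3,0}=\{l_{000}+l_{110}-l_{010}-l_{100}=0\}$, $\mathcal{L}_{3,1}=\{l_{001}+l_{111}-l_{011}-l_{101}=0\}$. The complement of the union of these hyperplanes has exactly $46$ connected components (regions), and exactly $44$ of these regions are contained in the set $\{l\in\mathbb{R}^8:\ \exp(l)/\sum_{x}\exp(l_x)\in\mathcal{M}_{3,3}\}$, where $\exp$ is applied entrywise.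
   Context: $\Delta_7$ is the set of $2\times2\times2$ tensors with nonnegative entries summing to $1$. $\mathcal{M}_{3,3}$ is the set of $p\in\Delta_7$ that are a sum of three tensors $a\otimes b\otimes c$ (entries $a_ib_jc_k$) with $a,b,c\in\mathbb{R}^2_{\ge0}$. *)

From Stdlib Require Import Reals.
Open Scope R_scope.

(* A point of R^8 = a real 2x2x2 tensor; index i,j,k : bool, with
   false = 0 and true = 1, so  l false true true  is  l_{011}. *)
Definition pt := bool -> bool -> bool -> R.

Definition sumb (g : bool -> R) : R := g false + g true.
Definition sum8 (f : pt) : R :=
  sumb (fun i => sumb (fun j => sumb (fun k => f i j k))).

(* Topology of R^8 (sup-norm balls, same topology as Euclidean). *)
Definition open_set (U : pt -> Prop) : Prop :=
  forall x, U x -> exists eps, 0 < eps /\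
    forall y, (forall i j k, Rabs (y i j k - x i j k) < eps) -> U y.

Definition connected_set (A : pt -> Prop) : Prop :=
  ~ exists U V : pt -> Prop, open_set U /\ open_set V /\
      (forall x, A x -> U x \/ V x) /\
      (exists x, A x /\ U x) /\ (exists x, A x /\ V x) /\
      (forall x, A x -> U x -> V x -> False).

Definition same_component (A : pt -> Prop) (x y : pt) : Prop :=
  exists C : pt -> Prop, (forall z, C z -> A z) /\ connected_set C /\ C x /\ C y.

Definition L10 (l : pt) := l false false false + l false true true - l false false true - l false true false.
Definition L11 (l : pt) := l true false false + l true true true - l true false true - l true true false.
Definition L20 (l : pt) := l false false false + l true false true - l false false true - l true false false.
Definition L21 (l : pt) := l false true false + l true true true - l false true true - l true true false.
Definition L30 (l : pt) := l false false false + l true true false - l false true false - l true false false.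
Definition L31 (l : pt) := l false false true + l true true true - l false true true - l true false true.

Definition arr_complement (l : pt) : Prop :=
  L10 l <> 0 /\ L11 l <> 0 /\ L20 l <> 0 /\ L21 l <> 0 /\ L30 l <> 0 /\ L31 l <> 0.

Definition in_simplex (p : pt) : Prop :=
  (forall i j k, 0 <= p i j k) /\ sum8 p = 1.

Definition M33 (p : pt) : Prop :=
  in_simplex p /\
  exists a b c : nat -> bool -> R,
    (forall r i, 0 <= a r i) /\ (forall r i, 0 <= b r i) /\ (forall r i, 0 <= c r i) /\
    forall i j k, p i j k = a 0%nat i * b 0%nat j * c 0%nat k
                          + a 1%nat i * b 1%nat j * c 1%nat k
                          + a 2%nat i * b 2%nat j * c 2%nat k.

Definition softmax (l : pt) : pt :=
  fun i j k => exp (l i j k) / sum8 (fun i' j' k' => exp (l i' j' k')).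

(* The six forms satisfy L10 - L11 = L20 - L21 = L30 - L31 =: D.  A sign vector of the
   forms is therefore realized exactly when it does not force D to be both positive and
   negative; there are 46 such sign vectors.  Each one is cut out by strict linear
   inequalities, so it describes a convex region, and points with different sign vectors
   lie in different components because no form vanishes on the complement.

   Under softmax, the sign of a form is the sign of a 2x2 minor of p = softmax l.  When the
   two minors formed by three columns of a positive 2x2x2 tensor have the same sign, the
   middle column is a nonnegative combination of the outer ones, and this gives an explicit
   sum of three nonnegative rank-one tensors.  One of eight such pairs of minors has equal
   signs in every region except the two where each L_{i0} has the sign opposite to L_{i1},
   uniformly in i.  Those two regions contain the points equal to 2 on one parity class of
   indices and 0 on the other.  Their softmax is heavy on the four positions of that parity,
   which pairwise differ in two coordinates; a nonnegative rank-one tensor heavy at two of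
   them is heavy at a position of the other parity, so three rank-one terms cannot account
   for four heavy positions. *)
From Pilot Require Import Defs.
From Stdlib Require Import Reals Lra Lia List Bool.
From Stdlib Require Import Classical FunctionalExtensionality.
Import ListNotations.
Open Scope R_scope.

Definition nonneg_rank_le3 (p : pt) : Prop :=
  exists a b c : nat -> bool -> R,
    (forall r i, 0 <= a r i) /\ (forall r i, 0 <= b r i) /\ (forall r i, 0 <= c r i) /\
    forall i j k, p i j k = a 0%nat i * b 0%nat j * c 0%nat k
                          + a 1%nat i * b 1%nat j * c 1%nat k
                          + a 2%nat i * b 2%nat j * c 2%nat k.

Definition has_sign (b : bool) (x : R) : Prop := if b then 0 < x else x < 0.

Lemma has_sign_neq0 b x : has_sign b x -> x <> 0.
Proof. destruct b; simpl; lra. Qed.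

Lemma has_sign_dec x : x <> 0 -> exists b, has_sign b x.
Proof.
  intros Hx. destruct (Rlt_or_le 0 x); [exists true | exists false]; simpl; lra.
Qed.

Lemma has_sign_unique b c x : has_sign b x -> has_sign c x -> b = c.
Proof. destruct b, c; simpl; lra. Qed.

Lemma has_sign_eq b x y : has_sign b x -> x = y -> has_sign b y.
Proof. intros H <-. exact H. Qed.

Lemma has_sign_opp_eq b x y : has_sign b x -> - x = y -> has_sign (negb b) y.
Proof. intros H <-. destruct b; simpl in *; lra. Qed.

Lemma has_sign_div b x y : has_sign b x -> 0 < y -> has_sign b (x / y).
Proof.
  intros H Hy. pose proof (Rinv_0_lt_compat y Hy). unfold Rdiv.
  destruct b; simpl in *; nra.
Qed.

Lemma has_sign_exp_sub b u v : has_sign b (u - v) -> has_sign b (exp u - exp v).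
Proof.
  destruct b; simpl; intros H.
  - pose proof (exp_increasing v u ltac:(lra)). lra.
  - pose proof (exp_increasing u v ltac:(lra)). lra.
Qed.

Lemma has_sign_convex b u v t :
  has_sign b u -> has_sign b v -> 0 <= t <= 1 -> has_sign b (u + t * (v - u)).
Proof. destruct b; simpl; intros; nra. Qed.

(** * Topology of R^8 *)

Definition lipschitz (F : pt -> R) : Prop :=
  exists K, 0 < K /\ forall x y e,
    (forall i j k, Rabs (y i j k - x i j k) < e) -> Rabs (F y - F x) < K * e.

Lemma open_set_has_sign (F : pt -> R) (b : bool) :
  lipschitz F -> Defs.open_set (fun z => has_sign b (F z)).
Proof.
  intros [K [HK HF]] x Hx. exists (Rabs (F x) / K). split.
  - apply Rdiv_lt_0_compat; [apply Rabs_pos_lt, (has_sign_neq0 b) |]; assumption.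
  - intros y Hy. specialize (HF x y _ Hy).
    replace (K * (Rabs (F x) / K)) with (Rabs (F x)) in HF by (field; lra).
    apply Rabs_def2 in HF.
    destruct b; simpl in *; [rewrite Rabs_pos_eq in HF | rewrite Rabs_left in HF]; lra.
Qed.

Lemma has_sign_same_component (A : pt -> Prop) (F : pt -> R) (b : bool) (x y : pt) :
  lipschitz F -> (forall z, A z -> F z <> 0) -> same_component A x y ->
  has_sign b (F x) -> has_sign b (F y).
Proof.
  intros HF HA (C & HCA & Hconn & Cx & Cy) Hx.
  destruct (has_sign_dec (F y) (HA y (HCA y Cy))) as [b' Hy].
  destruct (bool_dec b' b) as [<- | Hne]; [exact Hy |].
  replace b' with (negb b) in Hy by (destruct b, b'; simpl; congruence).
  exfalso. apply Hconn.
  exists (fun z => has_sign b (F z)), (fun z => has_sign (negb b) (F z)).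
  repeat split; try apply open_set_has_sign, HF.
  - intros z Cz. destruct (has_sign_dec (F z) (HA z (HCA z Cz))) as [c Hz].
    destruct (bool_dec c b) as [<- | Hc]; [left | right]; [exact Hz |].
    replace (negb b) with c by (destruct b, c; simpl; congruence). exact Hz.
  - exists x. split; assumption.
  - exists y. split; assumption.
  - intros z _ H1 H2. pose proof (has_sign_unique _ _ _ H1 H2). destruct b; discriminate.
Qed.

Lemma interval_connected (P Q : R -> Prop) (a b : R) :
  (forall t, P t -> exists d, 0 < d /\ forall s, Rabs (s - t) < d -> P s) ->
  (forall t, Q t -> exists d, 0 < d /\ forall s, Rabs (s - t) < d -> Q s) ->
  (forall t, a <= t <= b -> P t \/ Q t) ->
  (forall t, a <= t <= b -> P t -> Q t -> False) ->
  a <= b -> P a -> Q b -> False.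
Proof.
  intros HP HQ Hcov Hdis Hab Pa Qb.
  (* m is the supremum of the t such that P holds on all of [a, t] *)
  set (E := fun t => a <= t <= b /\ forall s, a <= s <= t -> P s).
  assert (Ea : E a) by (split; [lra | intros s Hs; replace s with a by lra; exact Pa]).
  destruct (completeness E) as [m [Hub Hlub]].
  { exists b. intros t [Ht _]. lra. }
  { exists a. exact Ea. }
  assert (Ham : a <= m) by (apply Hub, Ea).
  assert (Hmb : m <= b) by (apply Hlub; intros t [Ht _]; lra).
  assert (below : forall s, a <= s < m -> P s).
  { intros s Hs. apply NNPP. intro Hn.
    enough (m <= s) by lra.
    apply Hlub. intros t [_ Ht]. destruct (Rle_or_lt t s) as [Hts | Hst]; [exact Hts |].
    exfalso. apply Hn, Ht. lra. }
  destruct (Hcov m (conj Ham Hmb)) as [Pm | Qm].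
  - destruct (Req_dec m b) as [-> | Hmb'].
    { exact (Hdis b (conj Hab (Rle_refl b)) Pm Qb). }
    destruct (HP m Pm) as [d [Hd Hball]].
    set (m' := Rmin (m + d / 2) b).
    assert (Hm'1 : m' <= m + d / 2) by apply Rmin_l.
    assert (Hm'2 : m' <= b) by apply Rmin_r.
    assert (Hm'3 : m < m') by (apply Rmin_glb_lt; lra).
    assert (Em' : E m').
    { split; [lra |]. intros s Hs. destruct (Rlt_or_le s m); [apply below; lra |].
      apply Hball. rewrite Rabs_right; lra. }
    pose proof (Hub m' Em'). lra.
  - destruct (Req_dec m a) as [-> | Hma].
    { exact (Hdis a (conj (Rle_refl a) Hab) Pa Qm). }
    destruct (HQ m Qm) as [d [Hd Hball]].
    set (s := Rmax a (m - d / 2)).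
    assert (Hs1 : a <= s) by apply Rmax_l.
    assert (Hs2 : m - d / 2 <= s) by apply Rmax_r.
    assert (Hs3 : s < m) by (apply Rmax_lub_lt; lra).
    apply (Hdis s); [lra | apply below; lra | apply Hball].
    rewrite Rabs_left; lra.
Qed.

Definition segment_point (x y : pt) (t : R) : pt :=
  fun i j k => x i j k + t * (y i j k - x i j k).

Definition segment (x y : pt) : pt -> Prop :=
  fun z => exists t, 0 <= t <= 1 /\ z = segment_point x y t.

Lemma coord_dist_bound (x y : pt) :
  exists K, 0 < K /\ forall i j k, Rabs (y i j k - x i j k) <= K.
Proof.
  exists (1 + sum8 (fun i j k => Rabs (y i j k - x i j k))).
  pose proof (fun i j k => Rabs_pos (y i j k - x i j k)) as P.
  pose proof (P false false false). pose proof (P false false true).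
  pose proof (P false true false). pose proof (P false true true).
  pose proof (P true false false). pose proof (P true false true).
  pose proof (P true true false). pose proof (P true true true).
  unfold sum8, sumb. split; [lra |]. intros [|] [|] [|]; lra.
Qed.

Lemma segment_point_stable (x y : pt) (U : pt -> Prop) (t : R) :
  Defs.open_set U -> U (segment_point x y t) ->
  exists d, 0 < d /\ forall s, Rabs (s - t) < d -> U (segment_point x y s).
Proof.
  intros HU Ht. destruct (HU _ Ht) as [eps [Heps Hball]].
  destruct (coord_dist_bound x y) as [K [HK HxyK]].
  exists (eps / K). split; [apply Rdiv_lt_0_compat; lra |].
  intros s Hs. apply Hball. intros i j k. unfold segment_point.
  replace (x i j k + s * (y i j k - x i j k) - (x i j k + t * (y i j k - x i j k)))
    with ((s - t) * (y i j k - x i j k)) by ring.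
  rewrite Rabs_mult.
  apply Rle_lt_trans with (Rabs (s - t) * K).
  - apply Rmult_le_compat_l; [apply Rabs_pos | apply HxyK].
  - replace eps with (eps / K * K) by (field; lra). apply Rmult_lt_compat_r; assumption.
Qed.

Lemma segment_connected (x y : pt) : connected_set (segment x y).
Proof.
  intros (U & V & HU & HV & Hcov & (zu & (tu & Htu & ->) & Uu) & (zv & (tv & Htv & ->) & Vv) & Hdis).
  set (P := fun t => U (segment_point x y t)).
  set (Q := fun t => V (segment_point x y t)).
  assert (HP : forall t, P t -> exists d, 0 < d /\ forall s, Rabs (s - t) < d -> P s)
    by (intros; apply segment_point_stable; assumption).
  assert (HQ : forall t, Q t -> exists d, 0 < d /\ forall s, Rabs (s - t) < d -> Q s)
    by (intros; apply segment_point_stable; assumption).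
  assert (Hc : forall a b, 0 <= a -> b <= 1 -> forall t, a <= t <= b -> P t \/ Q t)
    by (intros a b Ha Hb t Ht; apply Hcov; exists t; split; [lra | reflexivity]).
  assert (Hd : forall a b, 0 <= a -> b <= 1 -> forall t, a <= t <= b -> P t -> Q t -> False)
    by (intros a b Ha Hb t Ht; apply Hdis; exists t; split; [lra | reflexivity]).
  destruct (Rle_or_lt tu tv).
  - apply (interval_connected P Q tu tv); auto; [apply Hc | apply Hd]; lra.
  - apply (interval_connected Q P tv tu); auto; try lra.
    + intros t Ht. destruct (Hc tv tu ltac:(lra) ltac:(lra) t Ht); auto.
    + intros t Ht Qt Pt. exact (Hd tv tu ltac:(lra) ltac:(lra) t Ht Pt Qt).
Qed.

Lemma segment_endpoints (x y : pt) : segment x y x /\ segment x y y.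
Proof.
  split; [exists 0 | exists 1]; split; try lra;
    extensionality i; extensionality j; extensionality k; unfold segment_point; ring.
Qed.

(** * The arrangement and its sign vectors *)

Definition form (q : nat) : pt -> R :=
  match q with
  | 0 => L10 | 1 => L11 | 2 => L20 | 3 => L21 | 4 => L30 | _ => L31
  end%nat.

Lemma form_lipschitz (q : nat) : lipschitz (form q).
Proof.
  exists 4. split; [lra |]. intros x y e H.
  pose proof (fun i j k => Rabs_def2 _ _ (H i j k)) as B.
  destruct (B false false false), (B false false true), (B false true false), (B false true true),
    (B true false false), (B true false true), (B true true false), (B true true true).
  apply Rabs_def1;
    destruct q as [|[|[|[|[|q]]]]]; unfold form, L10, L11, L20, L21, L30, L31; lra.
Qed.

Lemma form_segment (q : nat) (x y : pt) (t : R) :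
  form q (segment_point x y t) = form q x + t * (form q y - form q x).
Proof.
  destruct q as [|[|[|[|[|q]]]]];
    unfold form, segment_point, L10, L11, L20, L21, L30, L31; ring.
Qed.

Lemma form_even_sub_odd (i : nat) (l : pt) :
  (i < 3)%nat -> form (2 * i) l - form (2 * i + 1) l = L10 l - L11 l.
Proof.
  intros Hi. destruct i as [|[|[|i]]]; [..| lia];
    cbv [form Nat.mul Nat.add L10 L11 L20 L21 L30 L31]; ring.
Qed.

Lemma arr_complement_forms (l : pt) :
  arr_complement l <-> forall q, (q < 6)%nat -> form q l <> 0.
Proof.
  split.
  - intros (H0 & H1 & H2 & H3 & H4 & H5) q Hq.
    destruct q as [|[|[|[|[|[|q]]]]]]; assumption || lia.
  - intros H. repeat split; [apply (H 0%nat) | apply (H 1%nat) | apply (H 2%nat)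
                            | apply (H 3%nat) | apply (H 4%nat) | apply (H 5%nat)]; lia.
Qed.

(* A sign vector is a list of six booleans, true meaning positive, listing the signs of
   L10, L11, L20, L21, L30, L31 in this order. *)
Definition sgn (s : list bool) (q : nat) : bool := nth q s false.

Definition realizes (s : list bool) (l : pt) : Prop :=
  forall q, (q < 6)%nat -> has_sign (sgn s q) (form q l).

Lemma realizes_arr_complement (s : list bool) (l : pt) : realizes s l -> arr_complement l.
Proof.
  intros H. apply arr_complement_forms. intros q Hq. exact (has_sign_neq0 _ _ (H q Hq)).
Qed.

Lemma realizes_exists (l : pt) :
  arr_complement l -> exists b0 b1 b2 b3 b4 b5, realizes [b0; b1; b2; b3; b4; b5] l.
Proof.
  intros Hl. rewrite arr_complement_forms in Hl.
  destruct (has_sign_dec (form 0 l)) as [b0 H0]; [apply Hl; lia |].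
  destruct (has_sign_dec (form 1 l)) as [b1 H1]; [apply Hl; lia |].
  destruct (has_sign_dec (form 2 l)) as [b2 H2]; [apply Hl; lia |].
  destruct (has_sign_dec (form 3 l)) as [b3 H3]; [apply Hl; lia |].
  destruct (has_sign_dec (form 4 l)) as [b4 H4]; [apply Hl; lia |].
  destruct (has_sign_dec (form 5 l)) as [b5 H5]; [apply Hl; lia |].
  exists b0, b1, b2, b3, b4, b5. intros q Hq.
  destruct q as [|[|[|[|[|[|q]]]]]]; assumption || lia.
Qed.

Lemma realizes_same_component (s : list bool) (x y : pt) :
  same_component arr_complement x y -> realizes s x -> realizes s y.
Proof.
  intros Hc Hx q Hq.
  apply (has_sign_same_component arr_complement (form q) _ x); [apply form_lipschitz | | exact Hc | exact (Hx q Hq)].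
  intros z Hz. exact (proj1 (arr_complement_forms z) Hz q Hq).
Qed.

Lemma same_component_of_realizes (s : list bool) (x y : pt) :
  realizes s x -> realizes s y -> same_component arr_complement x y.
Proof.
  intros Hx Hy. exists (segment x y). split; [| split; [| split]].
  - intros z [t [Ht ->]]. apply (realizes_arr_complement s). intros q Hq.
    rewrite form_segment. apply has_sign_convex; auto.
  - apply segment_connected.
  - apply segment_endpoints.
  - apply segment_endpoints.
Qed.

(* With D = L10 - L11, the pair (L_{i0}, L_{i1}) is rising when L_{i1} < 0 < L_{i0},
   which forces D > 0, and falling when L_{i0} < 0 < L_{i1}, which forces D < 0. *)
Definition rising (s : list bool) (i : nat) : bool := negb (sgn s (2 * i + 1)) && sgn s (2 * i).
Definition falling (s : list bool) (i : nat) : bool := sgn s (2 * i + 1) && negb (sgn s (2 * i)).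

Definition feasible (s : list bool) : bool :=
  negb (existsb (rising s) [0; 1; 2]%nat && existsb (falling s) [0; 1; 2]%nat).

Lemma realizes_feasible (s : list bool) (l : pt) : realizes s l -> feasible s = true.
Proof.
  intros Hs. unfold feasible.
  destruct (existsb (rising s) [0; 1; 2]%nat) eqn:Er; [| reflexivity].
  destruct (existsb (falling s) [0; 1; 2]%nat) eqn:Ef; [| reflexivity].
  exfalso.
  apply existsb_exists in Er as [i [Hi Hr]]. apply existsb_exists in Ef as [j [Hj Hf]].
  assert (Hi3 : (i < 3)%nat) by (simpl in Hi; lia).
  assert (Hj3 : (j < 3)%nat) by (simpl in Hj; lia).
  pose proof (Hs (2 * i)%nat ltac:(lia)) as Ai. pose proof (Hs (2 * i + 1)%nat ltac:(lia)) as Bi.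
  pose proof (Hs (2 * j)%nat ltac:(lia)) as Aj. pose proof (Hs (2 * j + 1)%nat ltac:(lia)) as Bj.
  pose proof (form_even_sub_odd i l Hi3). pose proof (form_even_sub_odd j l Hj3).
  unfold rising, falling in *.
  destruct (sgn s (2 * i + 1)), (sgn s (2 * i)), (sgn s (2 * j + 1)), (sgn s (2 * j));
    try discriminate; simpl in *; lra.
Qed.

(* A feasible sign vector is realized by a point with L_{i1} = level and L_{i0} = level + drift. *)
Definition level (tau sigma : bool) : R :=
  match sigma, tau with
  | true, true => 2 | false, false => -2 | true, false => 1 / 2 | false, true => - (1 / 2)
  end.

Definition drift (s : list bool) : R := if existsb (falling s) [0; 1; 2]%nat then -1 else 1.

Definition coord (s : list bool) (i : nat) : R := level (sgn s (2 * i)) (sgn s (2 * i + 1)).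

Definition rep (s : list bool) : pt :=
  fun i j k =>
    match i, j, k with
    | false, false, false => drift s + coord s 0 + coord s 1 + coord s 2
    | true, false, false => coord s 0
    | false, true, false => coord s 1
    | false, false, true => coord s 2
    | _, _, _ => 0
    end.

Lemma form_rep (s : list bool) (i : nat) :
  (i < 3)%nat ->
  form (2 * i + 1) (rep s) = coord s i /\ form (2 * i) (rep s) = coord s i + drift s.
Proof.
  intros Hi. destruct i as [|[|[|i]]]; [..| lia];
    cbv [form rep Nat.mul Nat.add L10 L11 L20 L21 L30 L31]; split; ring.
Qed.

Lemma level_sign (tau sigma : bool) (d : R) :
  d = 1 \/ d = -1 ->
  (negb sigma && tau = true -> d = 1) -> (sigma && negb tau = true -> d = -1) ->
  has_sign sigma (level tau sigma) /\ has_sign tau (level tau sigma + d).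
Proof.
  destruct tau, sigma; cbv [level has_sign negb andb]; intros [-> | ->] Hr Hf;
    try specialize (Hr eq_refl); try specialize (Hf eq_refl); split; lra.
Qed.

Lemma rep_realizes (s : list bool) : feasible s = true -> realizes s (rep s).
Proof.
  intros Hfeas.
  assert (Hd : drift s = 1 \/ drift s = -1) by (unfold drift; destruct existsb; auto).
  assert (Hpair : forall i, (i < 3)%nat ->
    has_sign (sgn s (2 * i + 1)) (form (2 * i + 1) (rep s)) /\
    has_sign (sgn s (2 * i)) (form (2 * i) (rep s))).
  { intros i Hi. destruct (form_rep s i Hi) as [-> ->].
    assert (Hin : In i [0; 1; 2]%nat) by (simpl; lia).
    apply level_sign; [exact Hd | intro Hr | intro Hf]; unfold drift.
    - destruct (existsb (falling s) [0; 1; 2]%nat) eqn:Ef; [| reflexivity].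
      assert (Er : existsb (rising s) [0; 1; 2]%nat = true)
        by (apply existsb_exists; exists i; split; assumption).
      unfold feasible in Hfeas. rewrite Er, Ef in Hfeas. discriminate.
    - replace (existsb (falling s) [0; 1; 2]%nat) with true; [reflexivity |].
      symmetry. apply existsb_exists. exists i. split; assumption. }
  intros q Hq. destruct q as [|[|[|[|[|[|q]]]]]];
    [ exact (proj2 (Hpair 0%nat ltac:(lia))) | exact (proj1 (Hpair 0%nat ltac:(lia)))
    | exact (proj2 (Hpair 1%nat ltac:(lia))) | exact (proj1 (Hpair 1%nat ltac:(lia)))
    | exact (proj2 (Hpair 2%nat ltac:(lia))) | exact (proj1 (Hpair 2%nat ltac:(lia))) | lia ].
Qed.

(** * Nonnegative rank three *)

Lemma cone_of_minors (A B C : bool -> R) (b : bool) :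
  0 < A false -> 0 < B false -> 0 < C false ->
  has_sign b (A false * B true - A true * B false) ->
  has_sign b (B false * C true - B true * C false) ->
  exists t mu, 0 <= t /\ 0 <= mu /\ forall j, B j = t * A j + mu * C j.
Proof.
  intros HA HB HC H1 H2.
  set (D := A false * C true - A true * C false).
  assert (HD : has_sign b D).
  { assert (B false * D = A false * (B false * C true - B true * C false)
                          + C false * (A false * B true - A true * B false))
      by (unfold D; ring).
    destruct b; simpl in *; nra. }
  exists ((B false * C true - B true * C false) / D), ((A false * B true - A true * B false) / D).
  assert (D <> 0) by exact (has_sign_neq0 _ _ HD).
  assert (ratio : forall x, has_sign b x -> 0 <= x / D).
  { intros x Hx. destruct b; simpl in *.
    - apply Rlt_le, Rdiv_lt_0_compat; assumption.
    - replace (x / D) with (- x / - D) by (field; assumption).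
      apply Rlt_le, Rdiv_lt_0_compat; lra. }
  split; [| split]; [apply ratio; assumption | apply ratio; assumption |].
  intros [|]; unfold D in *; field; assumption.
Qed.

Definition ind (b x : bool) : R := if Bool.eqb x b then 1 else 0.

(* If the column q i0 . (negb k0) is t q i0 . k0 + mu q (negb i0) . (negb k0), then
   q = e_i0 (x) q i0 . k0 (x) (e_k0 + t e_(negb k0))
     + e_(negb i0) (x) q (negb i0) . k0 (x) e_k0
     + (mu e_i0 + e_(negb i0)) (x) q (negb i0) . (negb k0) (x) e_(negb k0). *)
Lemma rank3_of_cone (q : pt) (i0 k0 : bool) (t mu : R) :
  (forall i j k, 0 <= q i j k) -> 0 <= t -> 0 <= mu ->
  (forall j, q i0 j (negb k0) = t * q i0 j k0 + mu * q (negb i0) j (negb k0)) ->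
  nonneg_rank_le3 q.
Proof.
  intros Hq Ht Hmu Hcone.
  exists (fun r i => match r with
                     | 0%nat => ind i0 i | 1%nat => ind (negb i0) i
                     | _ => if Bool.eqb i i0 then mu else 1 end).
  exists (fun r j => match r with
                     | 0%nat => q i0 j k0 | 1%nat => q (negb i0) j k0
                     | _ => q (negb i0) j (negb k0) end).
  exists (fun r k => match r with
                     | 0%nat => if Bool.eqb k k0 then 1 else t | 1%nat => ind k0 k
                     | _ => ind (negb k0) k end).
  repeat split.
  - intros [|[|r]] i; unfold ind; destruct (Bool.eqb _ _); lra.
  - intros [|[|r]] j; apply Hq.
  - intros [|[|r]] k; unfold ind; destruct (Bool.eqb _ _); lra.
  - intros i j k. pose proof (Hcone j) as Hj. unfold ind.
    destruct i0, k0, i, k; simpl in *; try rewrite Hj; ring.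
Qed.

Lemma rank3_of_minors (q : pt) (i0 k0 b : bool) :
  (forall i j k, 0 < q i j k) ->
  has_sign b (q i0 false k0 * q i0 true (negb k0) - q i0 true k0 * q i0 false (negb k0)) ->
  has_sign b (q i0 false (negb k0) * q (negb i0) true (negb k0)
              - q i0 true (negb k0) * q (negb i0) false (negb k0)) ->
  nonneg_rank_le3 q.
Proof.
  intros Hq H1 H2.
  destruct (cone_of_minors (fun j => q i0 j k0) (fun j => q i0 j (negb k0))
              (fun j => q (negb i0) j (negb k0)) b (Hq _ _ _) (Hq _ _ _) (Hq _ _ _) H1 H2)
    as (t & mu & Ht & Hmu & Hcone).
  apply (rank3_of_cone q i0 k0 t mu); auto.
  intros i j k. apply Rlt_le, Hq.
Qed.

Lemma nonneg_rank_le3_transpose (p : pt) :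
  nonneg_rank_le3 (fun i j k => p i k j) -> nonneg_rank_le3 p.
Proof.
  intros (a & b & c & Ha & Hb & Hc & H). exists a, c, b. repeat split; auto.
  intros i j k. rewrite (H i k j). ring.
Qed.

Definition parity (i j k : bool) : bool := xorb i (xorb j k).

(* Two distinct positions of equal parity differ in two coordinates; exchanging one of them
   between the two positions keeps the product of the rank-one entries and flips parity. *)
Lemma rank_one_off_parity (a b c : bool -> R) (m : R) (i j k i' j' k' : bool) :
  (forall x, 0 <= a x) -> (forall x, 0 <= b x) -> (forall x, 0 <= c x) -> 0 < m ->
  parity i j k = parity i' j' k' -> (i, j) <> (i', j') ->
  m <= a i * b j * c k -> m <= a i' * b j' * c k' ->
  exists x y z, parity x y z <> parity i j k /\ m <= a x * b y * c z.
Proof.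
  intros Ha Hb Hc Hm Hpar Hne H1 H2.
  assert (Hpos : forall x y z, 0 <= a x * b y * c z)
    by (intros; apply Rmult_le_pos; [apply Rmult_le_pos |]; auto).
  assert (swap : forall x y z x' y' z',
    a i * b j * c k * (a i' * b j' * c k') = a x * b y * c z * (a x' * b y' * c z') ->
    parity x y z <> parity i j k -> parity x' y' z' <> parity i j k ->
    exists x y z, parity x y z <> parity i j k /\ m <= a x * b y * c z).
  { intros x y z x' y' z' E P1 P2.
    destruct (Rle_or_lt m (a x * b y * c z)); [exists x, y, z; auto |].
    destruct (Rle_or_lt m (a x' * b y' * c z')); [exists x', y', z'; auto |].
    exfalso. pose proof (Hpos x y z). pose proof (Hpos x' y' z').
    assert (m * m <= a i * b j * c k * (a i' * b j' * c k'))
      by (apply Rmult_le_compat; lra).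
    nra. }
  unfold parity in *.
  destruct (bool_dec j j') as [<- | Hj].
  - apply (swap i j k' i' j k); [ring | |];
      destruct i, i', j, k, k'; simpl in *; congruence.
  - apply (swap i j' k i' j k'); [ring | |];
      destruct i, i', j, j', k, k'; simpl in *; congruence.
Qed.

Lemma not_rank3_of_parity_gap (p : pt) (par : bool) (m : R) :
  0 < m ->
  (forall i j k, parity i j k = par -> 3 * m <= p i j k) ->
  (forall i j k, parity i j k <> par -> p i j k < m) ->
  ~ nonneg_rank_le3 p.
Proof.
  intros Hm Hbig Hsmall (a & b & c & Ha & Hb & Hc & Hp).
  pose (T r i j k := a r i * b r j * c r k).
  assert (HT0 : forall r i j k, 0 <= T r i j k)
    by (intros; apply Rmult_le_pos; [apply Rmult_le_pos |]; auto).
  assert (HTp : forall r i j k, (r < 3)%nat -> T r i j k <= p i j k).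
  { intros r i j k Hr. rewrite Hp.
    pose proof (HT0 0%nat i j k). pose proof (HT0 1%nat i j k). pose proof (HT0 2%nat i j k).
    destruct r as [|[|[|r]]]; unfold T in *; lra || lia. }
  pose (kk i j := xorb par (xorb i j)).
  assert (Hkk : forall i j, parity i j (kk i j) = par)
    by (intros i j; unfold parity, kk; destruct i, j, par; reflexivity).
  assert (heavy : forall i j, exists r, (r < 3)%nat /\ m <= T r i j (kk i j)).
  { intros i j. pose proof (Hbig i j _ (Hkk i j)) as H. rewrite Hp in H.
    destruct (Rle_or_lt m (T 0%nat i j (kk i j))); [exists 0%nat; split; auto |].
    destruct (Rle_or_lt m (T 1%nat i j (kk i j))); [exists 1%nat; split; auto |].
    exists 2%nat. split; [lia |]. unfold T in *. lra. }
  assert (lonely : forall r i j i' j', (r < 3)%nat -> (i, j) <> (i', j') ->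
            m <= T r i j (kk i j) -> m <= T r i' j' (kk i' j') -> False).
  { intros r i j i' j' Hr Hne H1 H2.
    destruct (rank_one_off_parity (a r) (b r) (c r) m i j (kk i j) i' j' (kk i' j'))
      as (x & y & z & Hxyz & Hheavy); auto; [rewrite !Hkk; reflexivity |].
    rewrite Hkk in Hxyz. pose proof (Hsmall x y z Hxyz). pose proof (HTp r x y z Hr).
    unfold T in *. lra. }
  destruct (heavy false false) as (r0 & Hr0 & H0), (heavy false true) as (r1 & Hr1 & H1),
    (heavy true false) as (r2 & Hr2 & H2), (heavy true true) as (r3 & Hr3 & H3).
  assert (r0 = r1 \/ r0 = r2 \/ r0 = r3 \/ r1 = r2 \/ r1 = r3 \/ r2 = r3)%nat
    as [<- | [<- | [<- | [<- | [<- | <-]]]]] by lia;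
    [ exact (lonely r0 false false false true Hr0 ltac:(discriminate) H0 H1)
    | exact (lonely r0 false false true false Hr0 ltac:(discriminate) H0 H2)
    | exact (lonely r0 false false true true Hr0 ltac:(discriminate) H0 H3)
    | exact (lonely r1 false true true false Hr1 ltac:(discriminate) H1 H2)
    | exact (lonely r1 false true true true Hr1 ltac:(discriminate) H1 H3)
    | exact (lonely r2 true false true true Hr2 ltac:(discriminate) H2 H3) ].
Qed.

Lemma sum_exp_pos (l : pt) : 0 < sum8 (fun i j k => exp (l i j k)).
Proof.
  pose proof (fun i j k => exp_pos (l i j k)) as P.
  pose proof (P false false false). pose proof (P false false true).
  pose proof (P false true false). pose proof (P false true true).
  pose proof (P true false false). pose proof (P true false true).
  pose proof (P true true false). pose proof (P true true true).
  unfold sum8, sumb. lra.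
Qed.

Lemma softmax_pos (l : pt) i j k : 0 < softmax l i j k.
Proof. apply Rdiv_lt_0_compat; [apply exp_pos | apply sum_exp_pos]. Qed.

Lemma softmax_simplex (l : pt) : in_simplex (softmax l).
Proof.
  split; [intros; apply Rlt_le, softmax_pos |].
  pose proof (sum_exp_pos l). unfold softmax, sum8, sumb in *. field. lra.
Qed.

Lemma softmax_minor_sign (l : pt) (b : bool) (i1 j1 k1 i2 j2 k2 i3 j3 k3 i4 j4 k4 : bool) :
  has_sign b (l i1 j1 k1 + l i2 j2 k2 - l i3 j3 k3 - l i4 j4 k4) ->
  has_sign b (softmax l i1 j1 k1 * softmax l i2 j2 k2 - softmax l i3 j3 k3 * softmax l i4 j4 k4).
Proof.
  intros H. pose proof (sum_exp_pos l) as HS. unfold softmax.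
  set (S := sum8 _) in *.
  replace (exp (l i1 j1 k1) / S * (exp (l i2 j2 k2) / S) - exp (l i3 j3 k3) / S * (exp (l i4 j4 k4) / S))
    with ((exp (l i1 j1 k1 + l i2 j2 k2) - exp (l i3 j3 k3 + l i4 j4 k4)) / (S * S))
    by (rewrite !exp_plus; field; lra).
  apply has_sign_div; [| nra].
  apply has_sign_exp_sub. replace (l i1 j1 k1 + l i2 j2 k2 - (l i3 j3 k3 + l i4 j4 k4))
    with (l i1 j1 k1 + l i2 j2 k2 - l i3 j3 k3 - l i4 j4 k4) by ring.
  exact H.
Qed.

Lemma softmax_rank3_of_slices (l : pt) (i0 k0 b : bool) :
  has_sign b (l i0 false k0 + l i0 true (negb k0) - l i0 true k0 - l i0 false (negb k0)) ->
  has_sign b (l i0 false (negb k0) + l (negb i0) true (negb k0)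
              - l i0 true (negb k0) - l (negb i0) false (negb k0)) ->
  nonneg_rank_le3 (softmax l).
Proof.
  intros H1 H2. apply (rank3_of_minors _ i0 k0 b (softmax_pos l));
    apply softmax_minor_sign; assumption.
Qed.

Lemma softmax_rank3_of_slices_transposed (l : pt) (i0 k0 b : bool) :
  has_sign b (l i0 k0 false + l i0 (negb k0) true - l i0 k0 true - l i0 (negb k0) false) ->
  has_sign b (l i0 (negb k0) false + l (negb i0) (negb k0) true
              - l i0 (negb k0) true - l (negb i0) (negb k0) false) ->
  nonneg_rank_le3 (softmax l).
Proof.
  intros H1 H2. apply nonneg_rank_le3_transpose.
  apply (rank3_of_minors (fun i j k => softmax l i k j) i0 k0 b);
    [intros; apply softmax_pos | apply softmax_minor_sign; assumption ..].
Qed.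

(* Each disjunct selects slices for [softmax_rank3_of_slices] (first four) or its
   transposed version (last four) whose two minors have equal signs. *)
Definition decomposable (s : list bool) : bool :=
  Bool.eqb (sgn s 5) (sgn s 0) || Bool.eqb (sgn s 1) (negb (sgn s 5))
  || Bool.eqb (sgn s 4) (negb (sgn s 0)) || Bool.eqb (sgn s 4) (sgn s 1)
  || Bool.eqb (sgn s 3) (sgn s 0) || Bool.eqb (sgn s 1) (negb (sgn s 3))
  || Bool.eqb (sgn s 2) (negb (sgn s 0)) || Bool.eqb (sgn s 2) (sgn s 1).

Local Ltac from_form H :=
  first [ eapply has_sign_eq; [exact H |]
        | eapply has_sign_opp_eq; [exact H |] ];
  unfold L10, L11, L20, L21, L30, L31; ring.

Lemma decomposable_rank3 (s : list bool) (l : pt) :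
  realizes s l -> decomposable s = true -> nonneg_rank_le3 (softmax l).
Proof.
  intros Hs Hd.
  pose proof (Hs 0%nat ltac:(lia)) as H0. pose proof (Hs 1%nat ltac:(lia)) as H1.
  pose proof (Hs 2%nat ltac:(lia)) as H2. pose proof (Hs 3%nat ltac:(lia)) as H3.
  pose proof (Hs 4%nat ltac:(lia)) as H4. pose proof (Hs 5%nat ltac:(lia)) as H5.
  cbn [form] in H0, H1, H2, H3, H4, H5.
  unfold decomposable in Hd. rewrite !orb_true_iff in Hd.
  destruct Hd as [[[[[[[E | E] | E] | E] | E] | E] | E] | E]; apply eqb_prop in E.
  - rewrite E in H5. apply (softmax_rank3_of_slices l false false (sgn s 0)); cbn [negb];
      [from_form H0 | from_form H5].
  - apply (softmax_rank3_of_slices l true false (sgn s 1)); cbn [negb];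
      [from_form H1 | rewrite E; from_form H5].
  - apply (softmax_rank3_of_slices l false true (sgn s 4)); cbn [negb];
      [rewrite E; from_form H0 | from_form H4].
  - rewrite E in H4. apply (softmax_rank3_of_slices l true true (negb (sgn s 1))); cbn [negb];
      [from_form H1 | from_form H4].
  - rewrite E in H3. apply (softmax_rank3_of_slices_transposed l false false (sgn s 0)); cbn [negb];
      [from_form H0 | from_form H3].
  - apply (softmax_rank3_of_slices_transposed l true false (sgn s 1)); cbn [negb];
      [from_form H1 | rewrite E; from_form H3].
  - apply (softmax_rank3_of_slices_transposed l false true (sgn s 2)); cbn [negb];
      [rewrite E; from_form H0 | from_form H2].
  - rewrite E in H2. apply (softmax_rank3_of_slices_transposed l true true (negb (sgn s 1))); cbn [negb];
      [from_form H1 | from_form H2].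
Qed.

Definition parity_point (par : bool) (c : R) : pt :=
  fun i j k => if Bool.eqb (parity i j k) par then c else 0.

Definition alternating (b : bool) : list bool := [negb b; b; negb b; b; negb b; b].

Lemma parity_point_realizes (par : bool) (c : R) :
  0 < c -> realizes (alternating par) (parity_point par c).
Proof.
  intros Hc q Hq. destruct q as [|[|[|[|[|[|q]]]]]]; [..| lia];
    destruct par; cbv [has_sign sgn alternating nth negb form parity_point parity xorb Bool.eqb
                       L10 L11 L20 L21 L30 L31]; lra.
Qed.

Lemma softmax_parity_point (par : bool) (c : R) i j k :
  softmax (parity_point par c) i j k
  = (if Bool.eqb (parity i j k) par then exp c else 1) / (4 * exp c + 4).
Proof.
  unfold softmax.
  replace (sum8 (fun i' j' k' => exp (parity_point par c i' j' k'))) with (4 * exp c + 4)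
    by (destruct par; cbv [sum8 sumb parity_point parity xorb Bool.eqb]; rewrite exp_0; ring).
  unfold parity_point. destruct (Bool.eqb _ _); [| rewrite exp_0]; reflexivity.
Qed.

Lemma parity_point_not_rank3 (par : bool) : ~ nonneg_rank_le3 (softmax (parity_point par 2)).
Proof.
  pose proof (exp_ineq1 2 ltac:(lra)) as He.
  assert (HS : 0 < 4 * exp 2 + 4) by lra.
  apply (not_rank3_of_parity_gap _ par (exp 2 / (3 * (4 * exp 2 + 4)))).
  - apply Rdiv_lt_0_compat; lra.
  - intros i j k Hp. rewrite softmax_parity_point, Hp, eqb_reflx.
    apply Req_le. field. lra.
  - intros i j k Hp. rewrite softmax_parity_point.
    replace (Bool.eqb (parity i j k) par) with false
      by (destruct (parity i j k), par; simpl; congruence).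
    replace (exp 2 / (3 * (4 * exp 2 + 4))) with (exp 2 / 3 / (4 * exp 2 + 4)) by (field; lra).
    apply Rmult_lt_compat_r; [apply Rinv_0_lt_compat |]; lra.
Qed.

Fixpoint sign_vectors (n : nat) : list (list bool) :=
  match n with
  | O => [[]]
  | S n => flat_map (fun s => [true :: s; false :: s]) (sign_vectors n)
  end.

Definition regions : list (list bool) :=
  filter (fun s => feasible s && decomposable s) (sign_vectors 6)
  ++ [alternating false; alternating true].

Definition reg (n : nat) : pt := rep (nth n regions []).

Lemma regions_length : length regions = 46%nat.
Proof. vm_compute. reflexivity. Qed.

Lemma regions_feasible_length6 :
  forallb (fun s => feasible s && (length s =? 6)%nat) regions = true.
Proof. vm_compute. reflexivity. Qed.

Lemma regions_decomposable : forallb decomposable (firstn 44 regions) = true.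
Proof. vm_compute. reflexivity. Qed.

Lemma regions_last :
  nth 44 regions [] = alternating false /\ nth 45 regions [] = alternating true.
Proof. vm_compute. split; reflexivity. Qed.

Lemma regions_nodup : NoDup regions.
Proof. vm_compute. repeat constructor; simpl; intuition discriminate. Qed.

Lemma regions_complete (b0 b1 b2 b3 b4 b5 : bool) :
  feasible [b0; b1; b2; b3; b4; b5] = true -> In [b0; b1; b2; b3; b4; b5] regions.
Proof.
  destruct b0, b1, b2, b3, b4, b5; vm_compute; intros H;
    try discriminate; repeat first [left; reflexivity | right].
Qed.

Lemma region_feasible_length6 (n : nat) :
  (n < 46)%nat -> feasible (nth n regions []) = true /\ length (nth n regions []) = 6%nat.
Proof.
  intros Hn. rewrite <- regions_length in Hn.
  pose proof (proj1 (forallb_forall _ regions) regions_feasible_length6 _ (nth_In _ [] Hn)) as H.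
  apply andb_prop in H as [H1 H2]. split; [exact H1 | apply Nat.eqb_eq, H2].
Qed.

Lemma reg_realizes (n : nat) : (n < 46)%nat -> realizes (nth n regions []) (reg n).
Proof. intros Hn. apply rep_realizes, region_feasible_length6, Hn. Qed.

Lemma reg_distinct (n m : nat) :
  (n < 46)%nat -> (m < 46)%nat -> same_component arr_complement (reg n) (reg m) -> n = m.
Proof.
  intros Hn Hm Hc.
  pose proof (realizes_same_component _ _ _ Hc (reg_realizes n Hn)) as Hsn.
  pose proof (reg_realizes m Hm) as Hsm.
  apply (proj1 (NoDup_nth regions []) regions_nodup); rewrite ?regions_length; auto.
  apply nth_ext with (d := false) (d' := false).
  - rewrite (proj2 (region_feasible_length6 n Hn)), (proj2 (region_feasible_length6 m Hm)).
    reflexivity.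
  - intros q Hq. rewrite (proj2 (region_feasible_length6 n Hn)) in Hq.
    exact (has_sign_unique _ _ _ (Hsn q Hq) (Hsm q Hq)).
Qed.

Lemma reg_cover (l : pt) :
  arr_complement l -> exists n, (n < 46)%nat /\ same_component arr_complement (reg n) l.
Proof.
  intros Hl. destruct (realizes_exists l Hl) as (b0 & b1 & b2 & b3 & b4 & b5 & Hs).
  destruct (In_nth regions _ [] (regions_complete _ _ _ _ _ _ (realizes_feasible _ _ Hs)))
    as (n & Hn & Hnth).
  rewrite regions_length in Hn. exists n. split; [exact Hn |].
  apply (same_component_of_realizes [b0; b1; b2; b3; b4; b5]); [| exact Hs].
  rewrite <- Hnth. apply reg_realizes, Hn.
Qed.

Lemma reg_good (n : nat) :
  (n < 44)%nat -> forall l, same_component arr_complement (reg n) l -> M33 (softmax l).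
Proof.
  intros Hn l Hc. split; [apply softmax_simplex |].
  apply (decomposable_rank3 (nth n regions [])).
  - apply (realizes_same_component _ _ _ Hc), reg_realizes. lia.
  - replace (nth n regions []) with (nth n (firstn 44 regions) [])
      by (rewrite nth_firstn; apply Nat.ltb_lt in Hn; rewrite Hn; reflexivity).
    apply (proj1 (forallb_forall _ _) regions_decomposable), nth_In.
    rewrite length_firstn, regions_length. lia.
Qed.

Lemma reg_bad (n : nat) :
  (44 <= n < 46)%nat ->
  ~ (forall l, same_component arr_complement (reg n) l -> M33 (softmax l)).
Proof.
  intros Hn Hall.
  assert (Hpar : exists par, nth n regions [] = alternating par)
    by (destruct regions_last; assert (n = 44 \/ n = 45)%nat as [-> | ->] by lia; eauto).
  destruct Hpar as [par Hpar].
  apply (parity_point_not_rank3 par), (Hall (parity_point par 2)).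
  apply (same_component_of_realizes (alternating par)).
  - rewrite <- Hpar. apply reg_realizes. lia.
  - apply parity_point_realizes. lra.
Qed.

Theorem mainTheorem13 :
  exists reg : nat -> pt,
    (forall n, (n < 46)%nat -> arr_complement (reg n)) /\
    (forall n m, (n < 46)%nat -> (m < 46)%nat -> n <> m ->
        ~ same_component arr_complement (reg n) (reg m)) /\
    (forall l, arr_complement l ->
        exists n, (n < 46)%nat /\ same_component arr_complement (reg n) l) /\
    (forall n, (n < 44)%nat ->
        forall l, same_component arr_complement (reg n) l -> M33 (softmax l)) /\
    (forall n, (44 <= n < 46)%nat ->
        ~ (forall l, same_component arr_complement (reg n) l -> M33 (softmax l))).
Proof.
  exists reg. split; [| split; [| split; [| split]]].
  - intros n Hn. exact (realizes_arr_complement _ _ (reg_realizes n Hn)).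
  - intros n m Hn Hm Hnm Hc. exact (Hnm (reg_distinct n m Hn Hm Hc)).
  - exact reg_cover.
  - exact reg_good.
  - exact reg_bad.
Qed.
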